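(* Let $\mathbb{C}$ be a locally small category and $\mathbb{C}_{\mathit{fin}}$ a full subcategory satisfying (C1)–(C5) below. Let $U:\mathbb{C}^*\to\mathbb{C}$ be a reasonable expansion with unique restrictions. Let $F$ be a locally finite homogeneous object in $\mathbb{C}$ and assume that $U^{-1}(F)$ is compact with respect to the topology $\sigma_F$. Let $G=\mathrm{Aut}(F)$ and let $\mathcal{F}\in U^{-1}(F)$ be arbitrary. Then $U$ restricted to (the full subcategory spanned by) $\mathrm{Age}(\mathcal{F})$, as a functor into (the full subcategory spanned by) $\mathrm{Age}(F)$, has the expansion property if and only if $\mathrm{Age}(\mathcal{F})\subseteq\mathrm{Age}(\mathcal{F}')$ for all $\mathcal{F}'\in\overline{\mathcal{F}^G}$.
   Context: Write $A\to B$ if $\hom(A,B)\ne\varnothing$. Conditions: (C1) all morphisms of $\mathbb{C}$ are monomorphisms; (C2) $\mathrm{Ob}(\mathbb{C}_{\mathit{fin}})$ is a set; (C3) $\hom(A,B)$ is finite for $A,B\in\mathrm{Ob}(\mathbb{C}_{\mathit{fin}})$; (C4) for every $F\in\mathrm{Ob}(\mathbb{C})$ there is $A\in\mathrm{Ob}(\mathbb{C}_{\mathit{fin}})$ with $A\to F$; (C5) for every $B\in\mathrm{Ob}(\mathbb{C}_{\mathit{fin}})$ the set $\{A\in\mathrm{Ob}(\mathbb{C}_{\mathit{fin}}):A\to B\}$ is finite. $\mathrm{Age}(F)=\{A\in\mathrm{Ob}(\mathbb{C}_{\mathit{fin}}):A\to F\}$. $F$ is homogeneous if for all $A\in\mathrm{Ob}(\mathbb{C}_{\mathit{fin}})$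 and $e_1,e_2\in\hom(A,F)$ there is $g\in\mathrm{Aut}(F)$ with $g\cdot e_1=e_2$. $F$ is locally finite if for all $A,B\in\mathrm{Ob}(\mathbb{C}_{\mathit{fin}})$, $e\in\hom(A,F)$, $f\in\hom(B,F)$ there exist $D\in\mathrm{Ob}(\mathbb{C}_{\mathit{fin}})$, $r\in\hom(D,F)$, $p\in\hom(A,D)$, $q\in\hom(B,D)$ with $r\cdot p=e$, $r\cdot q=f$, such that for every $H\in\mathrm{Ob}(\mathbb{C})$, $r'\in\hom(H,F)$, $p'\in\hom(A,H)$, $q'\in\hom(B,H)$ with $r'\cdot p'=e$, $r'\cdot q'=f$ there is $s\in\hom(D,H)$ with $r'\cdot s=r$, $s\cdot p=p'$, $s\cdot q=q'$. An expansion of $\mathbb{C}$ is a locally small category $\mathbb{C}^*$ with a functor $U:\mathbb{C}^*\to\mathbb{C}$ surjective on objects and injective on hom-sets; we regard $\hom_{\mathbb{C}^*}(\mathcal{A},\mathcal{B})\subseteq\hom_{\mathbb{C}}(U\mathcal{A},U\mathcal{B})$, and $U^{-1}(A)=\{\mathcal{A}:U(\mathcal{A})=A\}$. $U$ is reasonable if for every $e\in\hom(A,B)$ and $\mathcal{A}\in U^{-1}(A)$ there is $\mathcal{B}\in U^{-1}(B)$ with $e\in\hom(\mathcal{A},\mathcal{B})$; it has unique restrictions if for every $\mathcal{B}$ and $e\in\hom(A,U(\mathcal{B}))$ there is exactly one $\mathcal{A}\in U^{-1}(A)$ with $e\in\hom(\mathcal{A},\mathcal{B})$. $\mathbb{C}^*_{\mathit{fin}}$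 is the full subcategory of $\mathbb{C}^*$ on $\bigcup\{U^{-1}(A):A\in\mathrm{Ob}(\mathbb{C}_{\mathit{fin}})\}$, and $\mathrm{Age}(\mathcal{F})=\{\mathcal{A}\in\mathrm{Ob}(\mathbb{C}^*_{\mathit{fin}}):\mathcal{A}\to\mathcal{F}\}$. The restricted functor has the expansion property if for every $A\in\mathrm{Age}(F)$ there is $B\in\mathrm{Age}(F)$ such that $\mathcal{A}\to\mathcal{B}$ for all $\mathcal{A},\mathcal{B}\in\mathrm{Age}(\mathcal{F})$ with $U(\mathcal{A})=A$, $U(\mathcal{B})=B$. For $g\in G$, $\mathcal{F}^g$ is the unique $\mathcal{F}'\in U^{-1}(F)$ with $g^{-1}\in\hom(\mathcal{F},\mathcal{F}')$, and $\mathcal{F}^G=\{\mathcal{F}^g:g\in G\}$. $\sigma_F$ is the topology on $U^{-1}(F)$ generated by the sets $N(e,\mathcal{A})=\{\mathcal{F}\in U^{-1}(F):e\in\hom(\mathcal{A},\mathcal{F})\}$, $\mathcal{A}\in\mathrm{Ob}(\mathbb{C}^*_{\mathit{fin}})$, $e\in\hom(U(\mathcal{A}),F)$; $\overline{\mathcal{F}^G}$ is the closure in $\sigma_F$. *)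

From Stdlib Require Import List.
Set Implicit Arguments.
Set Universe Polymorphism.

Record Category := {
  Ob : Type;
  Hom : Ob -> Ob -> Type;
  idm : forall A, Hom A A;
  (* comp g f = g . f  (first f, then g) *)
  comp : forall A B D, Hom B D -> Hom A B -> Hom A D;
  comp_assoc : forall A B D E (h : Hom D E) (g : Hom B D) (f : Hom A B),
      comp h (comp g f) = comp (comp h g) f;
  comp_id_l : forall A B (f : Hom A B), comp (idm B) f = f;
  comp_id_r : forall A B (f : Hom A B), comp f (idm A) = f
}.
Arguments Hom {c} _ _.
Arguments idm {c} _.
Arguments comp {c A B D} _ _.

Record Functor (C D : Category) := {
  fobj : Ob C -> Ob D;
  fmor : forall A B, @Hom C A B -> @Hom D (fobj A) (fobj B);
  fmor_id : forall A, fmor A A (@idm C A) = @idm D (fobj A);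
  fmor_comp : forall A B E (g : @Hom C B E) (f : @Hom C A B),
      fmor A E (@comp C A B E g f) = @comp D _ _ _ (fmor B E g) (fmor A B f)
}.
Arguments fobj {C D} _ _.
Arguments fmor {C D} _ {A B} _.

Section Defs.
Variable C : Category.
(* The full subcategory C_fin is given by the predicate [fin] on objects. *)
Variable fin : Ob C -> Prop.

Definition arrow (A B : Ob C) : Prop := inhabited (Hom A B).

Definition finite_type (T : Type) : Prop := exists l : list T, forall x, In x l.

Definition C1 : Prop :=
  forall (A B : Ob C) (f : Hom A B) (X : Ob C) (g h : Hom X A),
    comp f g = comp f h -> g = h.
Definition C3 : Prop := forall A B, fin A -> fin B -> finite_type (Hom A B).
Definition C4 : Prop := forall F : Ob C, exists A, fin A /\ arrow A F.
Definition C5 : Prop :=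
  forall B, fin B -> exists l : list (Ob C), forall A, fin A -> arrow A B -> In A l.

Definition Age (F : Ob C) (A : Ob C) : Prop := fin A /\ arrow A F.

Definition Aut (F : Ob C) : Type :=
  { gh : Hom F F * Hom F F |
    comp (fst gh) (snd gh) = idm F /\ comp (snd gh) (fst gh) = idm F }.
Definition aut_fun {F} (g : Aut F) : Hom F F := fst (proj1_sig g).
Definition aut_inv {F} (g : Aut F) : Hom F F := snd (proj1_sig g).

Definition homogeneous (F : Ob C) : Prop :=
  forall A, fin A -> forall e1 e2 : Hom A F,
    exists g : Aut F, comp (aut_fun g) e1 = e2.

Definition locally_finite (F : Ob C) : Prop :=
  forall A B, fin A -> fin B -> forall (e : Hom A F) (f : Hom B F),
    exists (D : Ob C) (r : Hom D F) (p : Hom A D) (q : Hom B D),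
      fin D /\ comp r p = e /\ comp r q = f /\
      forall (H : Ob C) (r' : Hom H F) (p' : Hom A H) (q' : Hom B H),
        comp r' p' = e -> comp r' q' = f ->
        exists s : Hom D H, comp r' s = r /\ comp s p = p' /\ comp s q = q'.

(** Morphisms of C packed with their domain and codomain, so that
    "e \in hom(calA, calB)" can be stated for e : hom(A,B) with A = U calA. *)
Definition morph : Type := { AB : Ob C * Ob C & Hom (fst AB) (snd AB) }.
Definition mkm {A B : Ob C} (e : Hom A B) : morph :=
  existT (fun AB : Ob C * Ob C => Hom (fst AB) (snd AB)) (A, B) e.

Variable Cs : Category.
Variable U : Functor Cs C.

Definition is_expansion : Prop :=
  (forall A : Ob C, exists cA, fobj U cA = A) /\
  (forall cA cB (f g : Hom cA cB), fmor U f = fmor U g -> f = g).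

(** e \in hom_{C*}(cA, cB) (as a subset of hom_C(U cA, U cB)) *)
Definition inhom (cA cB : Ob Cs) (m : morph) : Prop :=
  exists f : Hom cA cB, m = mkm (fmor U f).

Definition reasonable : Prop :=
  forall (cA : Ob Cs) (B : Ob C) (e : Hom (fobj U cA) B),
    exists cB, fobj U cB = B /\ inhom cA cB (mkm e).

Definition unique_restrictions : Prop :=
  forall (cB : Ob Cs) (A : Ob C) (e : Hom A (fobj U cB)),
    exists cA, (fobj U cA = A /\ inhom cA cB (mkm e)) /\
      forall cA', fobj U cA' = A /\ inhom cA' cB (mkm e) -> cA' = cA.

(** Age of an object of C*, with C*_fin the full subcategory over C_fin *)
Definition AgeS (cF : Ob Cs) (cA : Ob Cs) : Prop :=
  fin (fobj U cA) /\ inhabited (Hom cA cF).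

Definition expansion_property (F : Ob C) (cF : Ob Cs) : Prop :=
  forall A, Age F A -> exists B, Age F B /\
    forall cA cB, AgeS cF cA -> AgeS cF cB ->
      fobj U cA = A -> fobj U cB = B -> inhabited (Hom cA cB).

Definition fiber (F : Ob C) : Type := { X : Ob Cs | fobj U X = F }.

(** index of a subbasic set N(e, cA): a pair (cA, e) with e : U cA -> F
    (we additionally require cA in C*_fin) *)
Definition subbasic_index (F : Ob C) : Type := { cA : Ob Cs & Hom (fobj U cA) F }.

Definition Nset {F : Ob C} (p : subbasic_index F) (x : fiber F) : Prop :=
  inhom (projT1 p) (proj1_sig x) (mkm (projT2 p)).

(** Open sets of the topology generated by the N(e,cA): unions of finite
    intersections of subbasic sets. *)
Definition sigma_open {F : Ob C} (O : fiber F -> Prop) : Prop :=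
  forall x, O x -> exists l : list (subbasic_index F),
    (forall p, In p l -> fin (fobj U (projT1 p))) /\
    (forall p, In p l -> Nset p x) /\
    (forall y, (forall p, In p l -> Nset p y) -> O y).

Definition sigma_compact (F : Ob C) : Prop :=
  forall (I : Type) (O : I -> fiber F -> Prop),
    (forall i, sigma_open (O i)) ->
    (forall x, exists i, O i x) ->
    exists l : list I, forall x, exists i, In i l /\ O i x.

Definition sigma_closure {F : Ob C} (S : fiber F -> Prop) (x : fiber F) : Prop :=
  forall O, sigma_open O -> O x -> exists y, O y /\ S y.

(** The orbit F^G = { F^g : g in G }, where F^g is the element F' of U^{-1}(F)
    with g^{-1} \in hom(cF, F') *)
Definition orbit (F : Ob C) (cF : Ob Cs) (x : fiber F) : Prop :=
  exists g : Aut F, inhom cF (proj1_sig x) (mkm (aut_inv g)).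

End Defs.

From Stdlib Require Import List Eqdep Classical.
Set Implicit Arguments.

(* Since restrictions are unique, an expansion [F'] in the orbit, with
   [g^-1 : F -> F'], is [F] transported along [g]: [e : A -> F'] is an embedding
   of an expansion [A] exactly when [g e] is one into [F].  Hence the age of [F]
   is contained in the age of every point of the orbit closure whenever the age
   of [F] has the expansion property: a finite [B] witnessing it for [A] embeds
   into every such point, since one of its restrictions does so into [F].
   Conversely, compactness of the fibre over [F] first shows that each finite [A]
   has only finitely many expansions.  Every point of the fibre then has a basic
   neighbourhood that either misses the orbit, or, by the hypothesis on the
   closure, carries an embedding of each expansion of [A] in the age of [F].
   Finitely many such neighbourhoods cover the fibre; local finiteness amalgamates
   the finitely many embeddings involved into one [r : B -> F], and homogeneity
   moves [r] onto any embedding of an expansion of [B] into [F]. *)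

Lemma Prop_filter_exists (T : Type) (P : T -> Prop) (l : list T) :
  exists l', forall x, In x l' <-> In x l /\ P x.
Proof.
  induction l as [|a l [l' Hl']].
  - exists nil. simpl. tauto.
  - destruct (classic (P a)) as [Pa|nPa].
    + exists (a :: l'). intros x. simpl. rewrite Hl'.
      split; [intros [<-|?]|intros [[<-|?] ?]]; tauto.
    + exists l'. intros x. simpl. rewrite Hl'.
      split; [tauto|intros [[<-|?] ?]; tauto].
Qed.

Section Inhom.
Variables (C Cs : Category) (U : Functor Cs C).

Lemma inhom_fmor cA cB (f : Hom cA cB) : inhom U cA cB (mkm C (fmor U f)).
Proof. exists f. reflexivity. Qed.

Lemma inhom_objs cA cB X Y (e : Hom X Y) :
  inhom U cA cB (mkm C e) -> fobj U cA = X /\ fobj U cB = Y.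
Proof.
  intros [f Hf]. apply (f_equal (@projT1 _ _)) in Hf. simpl in Hf.
  inversion Hf. auto.
Qed.

Lemma inhomP cA cB (e : Hom (fobj U cA) (fobj U cB)) :
  inhom U cA cB (mkm C e) -> exists f, fmor U f = e.
Proof. intros [f Hf]. exists f. apply inj_pair2 in Hf. auto. Qed.

Lemma inhom_comp cA cB cD X Y Z (e1 : Hom X Y) (e2 : Hom Y Z) :
  inhom U cA cB (mkm C e1) -> inhom U cB cD (mkm C e2) ->
  inhom U cA cD (mkm C (comp e2 e1)).
Proof.
  intros H1 H2.
  destruct (inhom_objs H1) as [<- <-]. destruct (inhom_objs H2) as [_ <-].
  destruct (inhomP H1) as [f1 <-]. destruct (inhomP H2) as [f2 <-].
  rewrite <- fmor_comp. apply inhom_fmor.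
Qed.

Lemma mkm_cast A B B' (H : B = B') (e : @Hom C A B) :
  mkm C (eq_rect B (Hom A) e B' H) = mkm C e.
Proof. destruct H. reflexivity. Qed.

Hypothesis Hur : unique_restrictions U.

Lemma restriction_unique A Y (e : Hom A Y) cB cA1 cA2 :
  inhom U cA1 cB (mkm C e) -> inhom U cA2 cB (mkm C e) -> cA1 = cA2.
Proof.
  intros H1 H2.
  destruct (inhom_objs H1) as [HA1 <-]. destruct (inhom_objs H2) as [HA2 _].
  destruct (Hur cB A e) as [cA [_ Huniq]].
  rewrite (Huniq cA1), (Huniq cA2); auto.
Qed.

Lemma restriction_exists {A Y : Ob C} (e : Hom A Y) cB :
  fobj U cB = Y -> exists cA, inhom U cA cB (mkm C e).
Proof. intros <-. destruct (Hur cB A e) as [cA [[_ H] _]]. eauto. Qed.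

Lemma aut_invK F (g : Aut C F) X (e : Hom X F) :
  comp (aut_inv g) (comp (aut_fun g) e) = e.
Proof.
  destruct (proj2_sig g) as [_ Hg]. unfold aut_inv, aut_fun.
  rewrite comp_assoc, Hg. apply comp_id_l.
Qed.

(* [cY] is the orbit point [cF^g]. *)
Lemma inhom_orbitE {cF cY : Ob Cs} {g : Aut C (fobj U cF)} {cB : Ob Cs}
    {e : Hom (fobj U cB) (fobj U cF)} :
  inhom U cF cY (mkm C (aut_inv g)) ->
  inhom U cB cY (mkm C e) <-> inhom U cB cF (mkm C (comp (aut_fun g) e)).
Proof.
  intros Hg. split; intros He.
  - destruct (restriction_exists (comp (aut_fun g) e) cF eq_refl) as [cB' Hge].
    pose proof (inhom_comp Hge Hg) as He'. rewrite aut_invK in He'.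
    rewrite (restriction_unique He' He) in Hge. exact Hge.
  - pose proof (inhom_comp He Hg) as He'. rewrite aut_invK in He'. exact He'.
Qed.

Hypothesis Hreas : reasonable U.

Lemma extension_exists cA {X Y : Ob C} (e : Hom X Y) :
  fobj U cA = X -> exists cB, inhom U cA cB (mkm C e).
Proof. intros <-. destruct (Hreas cA Y e) as [cB [_ H]]. eauto. Qed.

End Inhom.

Section Topology.
Variables (C Cs : Category) (U : Functor Cs C) (fin : Ob C -> Prop) (F : Ob C).

Definition fin_indices (l : list (subbasic_index U F)) : Prop :=
  forall p, In p l -> fin (fobj U (projT1 p)).

Definition basic_open (l : list (subbasic_index U F)) (y : fiber U F) : Prop :=
  forall p, In p l -> Nset p y.

Lemma basic_open_open l : fin_indices l -> sigma_open fin (basic_open l).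
Proof. intros Hl y Hy. exists l. auto. Qed.

Lemma Nset_open (p : subbasic_index U F) : fin (fobj U (projT1 p)) -> sigma_open fin (Nset p).
Proof.
  intros Hp y Hy. exists (p :: nil).
  split; [|split]; [intros q [<-|[]]; auto ..|intros z Hz; apply Hz; left; auto].
Qed.

Lemma not_closure_basic (S : fiber U F -> Prop) y :
  ~ sigma_closure fin S y ->
  exists l, fin_indices l /\ basic_open l y /\ forall z, basic_open l z -> ~ S z.
Proof.
  intros Hy. apply not_all_ex_not in Hy as [O Hy].
  apply imply_to_and in Hy as [HO Hy]. apply imply_to_and in Hy as [HOy Hy].
  destruct (HO y HOy) as [l [Hl [Hly HlO]]].
  exists l. split; [|split]; auto.
  intros z Hz HSz. apply Hy. exists z. auto.
Qed.

Lemma Age_basic_nbhd (y : fiber U F) (L : list (Ob Cs)) :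
  (forall cA, In cA L -> AgeS fin U (proj1_sig y) cA) ->
  exists l, fin_indices l /\ basic_open l y /\
    forall cA, In cA L -> exists e, In (existT _ cA e) l.
Proof.
  destruct y as [Y HY]. simpl.
  induction L as [|cA L IH]; intros HL.
  - exists nil. split; [|split]; intros ? [].
  - destruct IH as [l [Hfin [Hy HlL]]]. { intros; apply HL; right; auto. }
    destruct (HL cA (or_introl eq_refl)) as [HfA [k]].
    set (ek := eq_rect _ (Hom (fobj U cA)) (fmor U k) F HY).
    exists (existT _ cA ek :: l). split; [|split].
    + intros p [<-|Hp]; auto.
    + intros p [<-|Hp]; [|auto].
      unfold Nset, ek. simpl. rewrite mkm_cast. apply inhom_fmor.
    + intros cB [<-|HcB]; [exists ek; left; reflexivity|].
      destruct (HlL cB HcB) as [e He]. exists e. right; exact He.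
Qed.

Hypothesis Hur : unique_restrictions U.
Hypothesis Hreas : reasonable U.
Hypothesis Hcpt : sigma_compact fin U F.

Lemma expansions_finite {A : Ob C} (e0 : Hom A F) :
  fin A -> exists L, forall cA, fobj U cA = A -> In cA L.
Proof.
  intros HfA.
  destruct (Hcpt (fun cA (y : fiber U F) => inhom U cA (proj1_sig y) (mkm C e0)))
    as [L HL].
  - intros cA y Hy. destruct (inhom_objs Hy) as [<- _].
    exact (Nset_open (p := existT _ cA e0) HfA Hy).
  - intros [Y HY]. exact (restriction_exists Hur e0 Y HY).
  - exists L. intros cA HcA.
    destruct (extension_exists Hreas cA e0 HcA) as [cB HcB].
    destruct (HL (exist _ cB (proj2 (inhom_objs HcB)))) as [cA' [HcA' Hrestr]].
    rewrite <- (restriction_unique Hur Hrestr HcB). exact HcA'.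
Qed.

End Topology.

Lemma finite_family_factors (C : Category) (fin : Ob C -> Prop) (F : Ob C)
    (Hlf : locally_finite C fin F) (HC4 : C4 C fin)
    (l : list {X : Ob C & Hom X F}) :
  (forall p, In p l -> fin (projT1 p)) ->
  exists D (r : Hom D F), fin D /\
    forall p, In p l -> exists q : Hom (projT1 p) D, comp r q = projT2 p.
Proof.
  induction l as [|[X e] l IH]; intros Hfin.
  - destruct (HC4 F) as [D [HD [r]]]. exists D, r. split; auto. intros p [].
  - destruct IH as [D [r [HD Hq]]]. { intros p Hp; apply Hfin; right; auto. }
    destruct (Hlf D X HD (Hfin _ (or_introl eq_refl)) r e)
      as [D' [r' [p [q [HD' [Hp [Hq' _]]]]]]].
    exists D', r'. split; auto.
    intros p' [<-|Hp'].
    + exists q. exact Hq'.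
    + destruct (Hq p' Hp') as [q'' Hq'']. exists (comp p q'').
      rewrite comp_assoc, Hp. exact Hq''.
Qed.

Section Proposition.
Variables (C Cs : Category) (U : Functor Cs C) (fin : Ob C -> Prop) (cF : Ob Cs).
Hypothesis Hur : unique_restrictions U.

Lemma closure_Age_of_expansion_property :
  expansion_property fin U (fobj U cF) cF ->
  forall x : fiber U (fobj U cF), sigma_closure fin (orbit cF) x ->
  forall cA, AgeS fin U cF cA -> AgeS fin U (proj1_sig x) cA.
Proof.
  intros EP [X HX] Hcl cA [HfA [f]]. simpl.
  destruct (EP (fobj U cA)) as [B [[HfB [e]] HB]].
  { split; [exact HfA|constructor; exact (fmor U f)]. }
  destruct (restriction_exists Hur e X HX) as [cB HcB].
  destruct (inhom_objs HcB) as [<- _].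
  destruct (Hcl (Nset (existT _ cB e))) as [[Y HY] [HcBY [g Hg]]].
  { exact (Nset_open (p := existT _ cB e) fin HfB). }
  { exact HcB. }
  apply (inhom_orbitE Hur Hg) in HcBY. destruct HcBY as [k _].
  destruct (HB cA cB) as [h]; [split; [auto|constructor; auto] ..|auto|auto|].
  destruct HcB as [m _]. split; [exact HfA|constructor; exact (comp m h)].
Qed.

Hypothesis Hreas : reasonable U.
Hypothesis HC4 : C4 C fin.
Hypothesis Hlf : locally_finite C fin (fobj U cF).
Hypothesis Hhom : homogeneous C fin (fobj U cF).
Hypothesis Hcpt : sigma_compact fin U (fobj U cF).

Lemma expansion_property_of_closure_Age :
  (forall x : fiber U (fobj U cF), sigma_closure fin (orbit cF) x ->
   forall cA, AgeS fin U cF cA -> AgeS fin U (proj1_sig x) cA) ->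
  expansion_property fin U (fobj U cF) cF.
Proof.
  intros Hcl A [HfA [e0]].
  destruct (expansions_finite Hur Hreas Hcpt e0 HfA) as [L HL].
  destruct (Prop_filter_exists (AgeS fin U cF) L) as [L' HL'].
  set (good (l : list (subbasic_index U (fobj U cF))) := forall cA, In cA L' -> exists e, In (existT _ cA e) l).
  set (I := { l | fin_indices fin l /\
                  (good l \/ forall z, basic_open l z -> ~ orbit cF z) }).
  destruct (Hcpt (fun i : I => basic_open (proj1_sig i))) as [ls Hls].
  - intros i. exact (basic_open_open (proj1 (proj2_sig i))).
  - intros y. destruct (classic (sigma_closure fin (orbit cF) y)) as [Hy|Hy].
    + destruct (@Age_basic_nbhd _ _ U fin _ y L') as [l [Hl [Hly Hgood]]].
      { intros cA HcA. apply HL' in HcA as [_ HcA]. exact (Hcl y Hy cA HcA). }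
      exists (exist _ l (conj Hl (or_introl Hgood))). exact Hly.
    + destruct (not_closure_basic Hy) as [l [Hl [Hly Hbad]]].
      exists (exist _ l (conj Hl (or_intror Hbad))). exact Hly.
  - set (to_C (p : subbasic_index U (fobj U cF)) :=
           existT (fun X => Hom X (fobj U cF)) (fobj U (projT1 p)) (projT2 p)).
    destruct (finite_family_factors Hlf HC4
                (flat_map (fun i : I => map to_C (proj1_sig i)) ls))
      as [B [r [HfB Hr]]].
    { intros p Hp. apply in_flat_map in Hp as [i [_ Hp]].
      apply in_map_iff in Hp as [q [<- Hq]]. exact (proj1 (proj2_sig i) q Hq). }
    exists B. split; [split; [exact HfB|constructor; exact r]|].
    intros cA cB HAg [_ [k]] <- <-.
    destruct (Hhom HfB r (fmor U k)) as [g Hg].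
    destruct (extension_exists Hreas cF (aut_inv g) eq_refl) as [cY HY].
    set (y := exist (fun X => fobj U X = fobj U cF) cY (proj2 (inhom_objs HY))).
    destruct (Hls y) as [i [Hi Hy]].
    destruct (proj2_sig i) as [_ [Hgood|Hbad]];
      [|exfalso; exact (Hbad y Hy (ex_intro _ g HY))].
    destruct (Hgood cA (proj2 (HL' cA) (conj (HL _ eq_refl) HAg))) as [e He].
    destruct (Hr (to_C (existT _ cA e))) as [q Hq].
    { apply in_flat_map. eexists; split; [exact Hi|apply in_map; exact He]. }
    assert (HrY : inhom U cB cY (mkm C r)).
    { apply (inhom_orbitE Hur HY). rewrite Hg. apply inhom_fmor. }
    destruct (restriction_exists Hur q cB eq_refl) as [cA' Hq'].
    pose proof (inhom_comp Hq' HrY) as HeY. rewrite Hq in HeY.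
    rewrite (restriction_unique Hur HeY (Hy _ He)) in Hq'.
    destruct Hq' as [m _]. constructor; exact m.
Qed.

End Proposition.

Theorem proposition5p12
  (C : Category) (fin : Ob C -> Prop)
  (HC1 : C1 C) (HC3 : C3 C fin) (HC4 : C4 C fin) (HC5 : C5 C fin)
  (Cs : Category) (U : Functor Cs C)
  (Hexp : is_expansion U) (Hreas : reasonable U) (Hur : unique_restrictions U)
  (F : Ob C) (Hlf : locally_finite C fin F) (Hhom : homogeneous C fin F)
  (Hcpt : sigma_compact fin U F)
  (cF : Ob Cs) (HcF : fobj U cF = F) :
  expansion_property fin U F cF <->
  (forall x : fiber U F, sigma_closure fin (@orbit C Cs U F cF) x ->
     forall cA, AgeS fin U cF cA -> AgeS fin U (proj1_sig x) cA).
Proof.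
  subst F. split.
  - exact (closure_Age_of_expansion_property Hur).
  - exact (expansion_property_of_closure_Age Hur Hreas HC4 Hlf Hhom Hcpt).
Qed.
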